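(* Let $\mathcal{H},\mathcal{K}$ be real or complex Hilbert spaces and let $S:\mathcal{H}\to\mathcal{K}$ and $T:\mathcal{K}\to\mathcal{H}$ be (not necessarily densely defined or closed) linear operators. Let $M_{S,T}$ be the operator on $\mathcal{H}\times\mathcal{K}$ with domain $\operatorname{dom} S\times\operatorname{dom} T$ defined by $M_{S,T}(h,k)=(-Tk,Sh)$. The following assertions are equivalent: (i) $S$ and $T$ are densely defined and $S^*=T$ and $T^*=S$; (ii) every non-zero real number $t$ belongs to the resolvent set of $M_{S,T}$ and $$\|R_{S,T}(t)\|\le \frac{1}{|t|}\qquad\text{for all } t\in\mathbb{R},\ t\neq 0.$$
   Context: A scalar $\lambda$ belongs to the resolvent set of $M_{S,T}$ if $M_{S,T}-\lambda I$ (defined on $\operatorname{dom} S\times\operatorname{dom} T$) is injective and has an everywhere defined bounded inverse on $\mathcal{H}\times\mathcal{K}$; then $R_{S,T}(\lambda):=(M_{S,T}-\lambda I)^{-1}$. $\mathcal{H}\times\mathcal{K}$ carries the product Hilbert space norm. *)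

(* Hilbert spaces are complete normed
   spaces whose norm comes from an inner product (given explicitly). *)
From mathcomp Require Import all_boot all_algebra.
From mathcomp Require Import all_classical all_reals all_analysis.
From mathcomp Require Import complex.
Set Implicit Arguments. Unset Strict Implicit. Unset Printing Implicit Defensive.
Import GRing.Theory Num.Theory.
Local Open Scope classical_set_scope.
Local Open Scope ring_scope.

Section Defs.
Variable (K : numFieldType).

(* [ip] is an inner product on V inducing the norm of V, w.r.t. the
   conjugation [cj] of the scalar field (identity for R, complex conjugation
   for C).  Linear in the first argument, conjugate-symmetric, and
   |v|^2 = <v,v> (which gives positive definiteness). *)
Definition is_inner_product (cj : K -> K) (V : normedModType K)
    (ip : V -> V -> K) : Prop :=
  [/\ (forall (a : K) (x y z : V), ip (a *: x + y) z = a * ip x z + ip y z),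
      (forall x y : V, ip y x = cj (ip x y)) &
      (forall v : V, `|v| ^+ 2 = ip v v)].

(* D is a linear subspace and A is linear on D: a linear operator with
   domain D (values of A outside D are irrelevant). *)
Definition linear_subspace (V : lmodType K) (D : set V) : Prop :=
  D 0 /\ forall (a : K) (x y : V), D x -> D y -> D (a *: x + y).

Definition linear_op (V W : lmodType K) (D : set V) (A : V -> W) : Prop :=
  linear_subspace D /\
  forall (a : K) (x y : V), D x -> D y -> A (a *: x + y) = a *: A x + A y.

Definition densely_defined (V : normedModType K) (D : set V) : Prop :=
  closure D = setT.

Definition is_adjoint (V W : normedModType K) (ipV : V -> V -> K)
    (ipW : W -> W -> K) (DA : set V) (A : V -> W) (DB : set W) (B : W -> V)
    : Prop :=
  (forall k : W, DB k <-> exists z : V, forall h, DA h -> ipW (A h) k = ipV h z)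
  /\ (forall k : W, DB k -> forall h, DA h -> ipW (A h) k = ipV h (B k)).

Definition MST_sub (H Kk : lmodType K) (S : H -> Kk) (T : Kk -> H) (lam : K)
    (z : H * Kk) : H * Kk :=
  (- T z.2 - lam *: z.1, S z.1 - lam *: z.2).

Definition pnorm2 (H Kk : normedModType K) (z : H * Kk) : K :=
  `|z.1| ^+ 2 + `|z.2| ^+ 2.

Definition is_inverse_MST (H Kk : lmodType K) (DS : set H) (S : H -> Kk)
    (DT : set Kk) (T : Kk -> H) (lam : K) (Rinv : H * Kk -> H * Kk) : Prop :=
  (forall z, DS (Rinv z).1 /\ DT (Rinv z).2 /\ MST_sub S T lam (Rinv z) = z)
  /\ (forall w : H * Kk, DS w.1 -> DT w.2 -> Rinv (MST_sub S T lam w) = w).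

(* operator norm bound  ||A|| <= c  (for c >= 0) w.r.t. the product Hilbert
   norm, written with squares to avoid square roots *)
Definition opnorm_le (H Kk : normedModType K) (A : H * Kk -> H * Kk) (c : K)
    : Prop :=
  forall z, pnorm2 (A z) <= c ^+ 2 * pnorm2 z.

Definition in_resolvent (H Kk : normedModType K) (DS : set H) (S : H -> Kk)
    (DT : set Kk) (T : Kk -> H) (lam : K) : Prop :=
  exists Rinv, is_inverse_MST DS S DT T lam Rinv /\
    exists c : K, 0 <= c /\ opnorm_le Rinv c.

Definition thm_statement (cj : K -> K) (H Kk : completeNormedModType K)
    (ipH : H -> H -> K) (ipK : Kk -> Kk -> K)
    (DS : set H) (S : H -> Kk) (DT : set Kk) (T : Kk -> H) : Prop :=
  (densely_defined DS /\ densely_defined DT /\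
   is_adjoint ipH ipK DS S DT T /\ is_adjoint ipK ipH DT T DS S)
  <->
  (forall t : K, t \is Num.real -> t != 0 ->
     in_resolvent DS S DT T t /\
     forall Rinv, is_inverse_MST DS S DT T t Rinv -> opnorm_le Rinv (`|t|^-1)).

End Defs.

From mathcomp Require Import all_boot all_order all_algebra.
From mathcomp Require Import all_classical all_reals all_analysis.
From mathcomp Require Import complex.
From mathcomp Require Import ring lra.
Import Order.TTheory GRing.Theory Num.Theory.
Set Implicit Arguments. Unset Strict Implicit. Unset Printing Implicit Defensive.
Local Open Scope classical_set_scope.
Local Open Scope ring_scope.

(* Write M for (h, k) |-> (- T k, S h) on dom S x dom T and <z, w> for the real
   part of the inner product of H x K.  Both (i) and (ii) are equivalent to M
   being skew-adjoint for this real form: <M z, z'> = - <z, M z'> on the domain,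
   and if <M z, y> = <z, v> for every z in the domain then y is in the domain
   and M y = - v.  This is the realified form of S^* = T and T^* = S.
   (i) => (ii): skew-symmetry gives |(M - t) z|^2 = |M z|^2 + t^2 |z|^2, so
   M - t is injective with an inverse of norm at most 1/|t|; its range is
   closed because the graph of a skew-adjoint operator is closed, and its
   orthogonal complement is trivial because y orthogonal to the range forces
   M y = - t y, hence t |y|^2 = <M y, y> = 0.  The projection theorem then
   makes M - t onto.
   (ii) => (i): the bound |(M - t) z|^2 >= t^2 |z|^2 for all real t <> 0 kills
   the term of the expansion that is linear in t, so M is skew-symmetric;
   surjectivity of M + 1 and M - 1 then yields skew-adjointness and the density
   of dom S and dom T.
   The real and complex cases are a single argument over a field K with an
   embedding of R and a real part, all analysis being done with real forms. *)

Lemma natSinv_lt (R : realType) (d : R) : 0 < d ->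
  exists N : nat, forall n, (N <= n)%N -> (n.+1%:R^-1 : R) < d.
Proof.
move=> d0; exists (Num.truncn d^-1) => n Nn.
rewrite -[d]invrK ltf_pV2 ?posrE ?invr_gt0 ?ltr0Sn //.
by apply: lt_le_trans (truncnS_gt _) _; rewrite ler_nat ltnS.
Qed.

Lemma eq0_of_quadratic_ge_linear (R : realFieldType) (c W : R) : 0 <= W ->
  (forall s, 2 * s * c <= s ^+ 2 * W) -> c = 0.
Proof.
move=> W0 H; pose s := c / (W + 1).
have Ws : c = s * (W + 1) by rewrite /s mulfVK // gt_eqF //; lra.
have := H s; rewrite Ws => h.
have s0 : s ^+ 2 * (W + 2) <= 0 by nra.
have s2 : s ^+ 2 <= 0 by rewrite -(pmulr_lle0 _ (_ : 0 < W + 2)) //; lra.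
have : s ^+ 2 == 0 by rewrite eq_le s2 sqr_ge0.
by rewrite sqrf_eq0 => /eqP ->; rewrite mul0r.
Qed.

Lemma eq0_of_affine_ge0 (R : realFieldType) (b c : R) :
  (forall r, r != 0 -> 0 <= b + r * c) -> c = 0.
Proof.
move=> H; apply/eqP/negPn/negP => c0.
have b0 : 0 <= b.
  have N10 : -1 != 0 :> R by rewrite oppr_eq0 oner_eq0.
  have := H 1 (oner_neq0 _); have := H (-1) N10; lra.
have r0 : - (b + 1) / c != 0 by rewrite mulf_neq0 ?invr_eq0 // oppr_eq0 gt_eqF //; lra.
by have := H _ r0; rewrite mulfVK //; lra.
Qed.

Lemma scale_sqr_lt (R : realFieldType) (c q e : R) : 0 <= q -> 0 < e ->
  q < e / (c ^+ 2 + 1) -> c ^+ 2 * q < e.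
Proof.
move=> q0 e0; have c1 : 0 < c ^+ 2 + 1 by have := sqr_ge0 c; lra.
rewrite ltr_pdivlMr // => qe.
have : c ^+ 2 * q <= (c ^+ 2 + 1) * q by rewrite ler_wpM2r // lerDl.
lra.
Qed.

(* Real parts of inner products, on a Hilbert space and on H x K (whose library
   norm is the max norm, not the Hilbert norm), are handled as real symmetric
   positive semidefinite forms; convergence is measured by the form itself. *)
Definition real_form (R : realType) (X : zmodType) (scale : R -> X -> X)
    (P : X -> X -> R) : Prop :=
  [/\ forall x y z, P (x + y) z = P x z + P y z,
      forall a x z, P (scale a x) z = a * P x z,
      forall x y, P x y = P y x &
      forall x, 0 <= P x x].

Section RealForm.
Variables (R : realType) (X : zmodType) (scale : R -> X -> X) (P : X -> X -> R).
Hypothesis formP : real_form scale P.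

Let formDl x y z : P (x + y) z = P x z + P y z. Proof. by case: formP. Qed.
Let formZl a x z : P (scale a x) z = a * P x z. Proof. by case: formP. Qed.
Let formC x y : P x y = P y x. Proof. by case: formP. Qed.
Let form_ge0 x : 0 <= P x x. Proof. by case: formP. Qed.

Lemma form0l z : P 0 z = 0.
Proof. by apply/(addrI (P 0 z)); rewrite -formDl !addr0. Qed.

Lemma form0r z : P z 0 = 0.
Proof. by rewrite formC form0l. Qed.

Lemma formNl x z : P (- x) z = - P x z.
Proof. by apply/(addrI (P x z)); rewrite -formDl !subrr form0l. Qed.

Lemma formBl x y z : P (x - y) z = P x z - P y z.
Proof. by rewrite formDl formNl. Qed.

Lemma formDr x y z : P z (x + y) = P z x + P z y.
Proof. by rewrite formC formDl !(formC _ z). Qed.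

Lemma formZr a x z : P z (scale a x) = a * P z x.
Proof. by rewrite formC formZl formC. Qed.

Lemma formNr x z : P z (- x) = - P z x.
Proof. by rewrite !(formC z) formNl. Qed.

Lemma formBr x y z : P z (x - y) = P z x - P z y.
Proof. by rewrite formDr formNr. Qed.

Let formE := (formDl, formNl, formZl, formDr, formNr, formZr).

Lemma form_sqrB x y : P (x - y) (x - y) = P x x - 2 * P x y + P y y.
Proof. by rewrite !formE (formC y x); ring. Qed.

Lemma form_sqrZB a x y :
  P (scale a x - scale a y) (scale a x - scale a y) = a ^+ 2 * P (x - y) (x - y).
Proof. by rewrite !formE; ring. Qed.

Lemma form_sqrD_le x y : P (x + y) (x + y) <= 2 * P x x + 2 * P y y.
Proof. by have := form_ge0 (x - y); rewrite !formE (formC y x); lra. Qed.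

Lemma form_parallelogram x a b :
  P (a - b) (a - b) + 4 * P (x - scale 2^-1 (a + b)) (x - scale 2^-1 (a + b)) =
  2 * P (x - a) (x - a) + 2 * P (x - b) (x - b).
Proof. by rewrite !formE (formC a x) (formC b x) (formC b a); field. Qed.

Lemma form_amgm mu x y : 0 < mu -> 2 * P x y <= mu * P x x + P y y / mu.
Proof.
move=> mu0; have := form_ge0 (scale mu x - y); rewrite !formE (formC y x) => h.
by rewrite -(ler_pM2l mu0) mulrDr (mulrC mu (_ / mu)) mulfVK ?gt_eqF //; lra.
Qed.

Definition form_cvg (u : nat -> X) (b : X) := forall e : R, 0 < e ->
  exists N, forall n, (N <= n)%N -> P (u n - b) (u n - b) < e.

Definition form_cauchy (u : nat -> X) := forall e : R, 0 < e ->
  exists N, forall m n, (N <= m)%N -> (N <= n)%N -> P (u m - u n) (u m - u n) < e.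

Lemma form_cvg_pairing u b a e : form_cvg u b -> 0 < e ->
  exists N, forall n, (N <= n)%N -> `|P (u n - b) a| < e.
Proof.
move=> cvgu e0; set mu := (P a a + 1) / e.
have qa := form_ge0 a.
have mu0 : 0 < mu by rewrite divr_gt0 //; lra.
have [N HN] := cvgu _ (divr_gt0 e0 mu0); exists N => n /HN small.
have h1 := form_amgm (u n - b) a mu0.
have h2 := form_amgm (- (u n - b)) a mu0.
rewrite !(formNl, formNr) opprK in h2.
have g1 : mu * P (u n - b) (u n - b) < e by rewrite mulrC -ltr_pdivlMr.
have g2 : P a a / mu < e.
  by rewrite ltr_pdivrMr // /mu mulrCA mulfV ?gt_eqF // mulr1; lra.
by rewrite ltr_norml; apply/andP; split; lra.
Qed.

Lemma form_cvgD u v a b : form_cvg u a -> form_cvg v b ->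
  form_cvg (fun n => u n + v n) (a + b).
Proof.
move=> cu cv e e0; have e4 : 0 < e / 4 by lra.
have [N1 H1] := cu _ e4; have [N2 H2] := cv _ e4.
exists (maxn N1 N2) => n; rewrite geq_max => /andP[/H1 h1 /H2 h2].
rewrite opprD addrACA; apply: le_lt_trans (form_sqrD_le _ _) _; lra.
Qed.

Lemma form_cvgZ c u a : form_cvg u a ->
  form_cvg (fun n => scale c (u n)) (scale c a).
Proof.
move=> cu e e0.
have c1 : 0 < c ^+ 2 + 1 by have := sqr_ge0 c; lra.
have [N HN] := cu _ (divr_gt0 e0 c1).
by exists N => n /HN h; rewrite form_sqrZB; apply: scale_sqr_lt.
Qed.

Lemma form_dist_le_lim x d vs v : form_cvg vs v ->
  (forall n, P (x - vs n) (x - vs n) < d + n.+1%:R^-1) -> P (x - v) (x - v) <= d.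
Proof.
move=> cvg_vs near; apply/ler_addgt0Pr => e e0.
have [e2 e4] : 0 < e / 2 /\ 0 < e / 4 by split; lra.
have [N1 H1] := natSinv_lt e2.
have [N2 H2] := form_cvg_pairing (x - v) cvg_vs e4.
pose n := maxn N1 N2; have qn := near n; have h1 := H1 n (leq_maxl _ _).
have := H2 n (leq_maxr _ _); rewrite ltr_norml => /andP[_ h2].
(* [set] identifies the two elaborations of [n.+1%:R^-1] (from [natSinv_lt]
   and from the hypothesis), which carry different instance paths for [lra]. *)
set i_n := (n.+1%:R^-1 : R) in h1 qn.
have expand : P (x - vs n) (x - vs n) =
    P (x - v) (x - v) - 2 * P (vs n - v) (x - v) + P (vs n - v) (vs n - v).
  have -> : x - vs n = (x - v) - (vs n - v) by rewrite opprB addrA subrK.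
  by rewrite form_sqrB (formC (x - v)).
have := form_ge0 (vs n - v); lra.
Qed.

Section Projection.
Variable V : set X.
Hypotheses (V0 : V 0) (VD : forall x y, V x -> V y -> V (x + y))
  (VZ : forall a x, V x -> V (scale a x))
  (Vcomplete : forall u, (forall n, V (u n)) -> form_cauchy u ->
     exists2 v, V v & form_cvg u v).

Lemma form_min_orth x v : V v ->
  (forall w, V w -> P (x - v) (x - v) <= P (x - w) (x - w)) ->
  forall w, V w -> P (x - v) w = 0.
Proof.
move=> Vv vmin w Vw; apply: (eq0_of_quadratic_ge_linear (form_ge0 w)) => s.
have := vmin _ (VD Vv (VZ s Vw)).
by rewrite opprD addrA (form_sqrB (x - v)) !formZr formZl; lra.
Qed.

Lemma form_minimizing_cauchy x d vs :
  (forall w, V w -> d <= P (x - w) (x - w)) ->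
  (forall n, V (vs n) /\ P (x - vs n) (x - vs n) < d + n.+1%:R^-1) ->
  form_cauchy vs.
Proof.
move=> dle Hvs e e0; have e4 : 0 < e / 4 by lra.
have [N HN] := natSinv_lt e4; exists N => m n /HN hm /HN hn.
have [[Vm qm] [Vn qn]] := (Hvs m, Hvs n).
have := form_parallelogram x (vs m) (vs n).
set im := (m.+1%:R^-1 : R) in hm qm; set i_n := (n.+1%:R^-1 : R) in hn qn.
have := dle _ (VZ 2^-1 (VD Vm Vn)); lra.
Qed.

Lemma form_min_exists x :
  exists2 v, V v & forall w, V w -> P (x - v) (x - v) <= P (x - w) (x - w).
Proof.
pose A := [set P (x - v) (x - v) | v in V].
have A0 : A (P (x - 0) (x - 0)) by exists 0.
have lbA : has_lbound A by exists 0 => _ [v _ <-].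
have dle w : V w -> inf A <= P (x - w) (x - w).
  by move=> Vw; apply: ge_inf => //; exists w.
have /choice[vs Hvs] n :
    exists v, V v /\ P (x - v) (x - v) < inf A + n.+1%:R^-1.
  have en : 0 < n.+1%:R^-1 :> R by rewrite invr_gt0.
  have [_ [v Vv <-] ?] := inf_adherent en (conj (ex_intro _ _ A0) lbA).
  by exists v.
have [v Vv cvg_vs] := Vcomplete (fun n => (Hvs n).1) (form_minimizing_cauchy dle Hvs).
exists v => // w Vw; apply: le_trans (dle _ Vw).
exact: form_dist_le_lim cvg_vs (fun n => (Hvs n).2).
Qed.

Theorem form_projection x : exists2 v, V v & forall w, V w -> P (x - v) w = 0.
Proof.
have [v Vv vmin] := form_min_exists x.
by exists v => //; apply: form_min_orth.
Qed.

Lemma form_orth_total : (forall y, (forall v, V v -> P v y = 0) -> y = 0) ->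
  forall x, V x.
Proof.
move=> orth x; have [v Vv xv] := form_projection x.
suff /eqP : x - v = 0 by rewrite subr_eq0 => /eqP ->.
by apply: orth => w /xv; rewrite formC.
Qed.

End Projection.

Definition form_closure (D : set X) :=
  [set x | forall e : R, 0 < e -> exists2 h, D h & P (x - h) (x - h) < e].

Lemma form_closure_orth D w : form_closure D w ->
  (forall h, D h -> P h w = 0) -> P w w = 0.
Proof.
move=> Dw orth; apply/eqP; rewrite eq_le form_ge0 andbT.
apply/ler_addgt0Pr => e /Dw[h Dh hw]; rewrite add0r ltW // (le_lt_trans _ hw) //.
by rewrite form_sqrB (formC w h) (orth h) //; have := form_ge0 h; lra.
Qed.

Section Closure.
Variable D : set X.
Hypotheses (D0 : D 0) (DD : forall x y, D x -> D y -> D (x + y))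
  (DZ : forall a x, D x -> D (scale a x))
  (Xcomplete : forall u, form_cauchy u -> exists b, form_cvg u b).

Lemma form_closure_sub h : D h -> form_closure D h.
Proof. by move=> Dh e e0; exists h; rewrite // subrr form0l. Qed.

Lemma form_closureD x y : form_closure D x -> form_closure D y ->
  form_closure D (x + y).
Proof.
move=> Dx Dy e e0; have e4 : 0 < e / 4 by lra.
have [h1 D1 q1] := Dx _ e4; have [h2 D2 q2] := Dy _ e4.
exists (h1 + h2); first exact: DD.
by rewrite opprD addrACA; apply: le_lt_trans (form_sqrD_le _ _) _; lra.
Qed.

Lemma form_closureZ a x : form_closure D x -> form_closure D (scale a x).
Proof.
move=> Dx e e0; have a1 : 0 < a ^+ 2 + 1 by have := sqr_ge0 a; lra.
have [h Dh q] := Dx _ (divr_gt0 e0 a1).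
by exists (scale a h); [exact: DZ | rewrite form_sqrZB; apply: scale_sqr_lt].
Qed.

Lemma form_closure_complete u : (forall n, form_closure D (u n)) ->
  form_cauchy u -> exists2 b, form_closure D b & form_cvg u b.
Proof.
move=> Du /Xcomplete[b cvgb]; exists b => // e e0; have e4 : 0 < e / 4 by lra.
have [N /(_ N (leqnn N)) qN] := cvgb _ e4; have [h Dh qh] := Du N _ e4.
exists h => //; have -> : b - h = (b - u N) + (u N - h) by rewrite addrA subrK.
apply: le_lt_trans (form_sqrD_le _ _) _.
by rewrite -opprB formNl formNr opprK; lra.
Qed.

Lemma form_dense_of_orth : (forall y, (forall h, D h -> P h y = 0) -> y = 0) ->
  forall x, form_closure D x.
Proof.
move=> orth; apply: form_orth_total.
- exact: form_closure_sub.
- exact: form_closureD.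
- exact: form_closureZ.
- exact: form_closure_complete.
- by move=> y Dy; apply: orth => h /form_closure_sub; apply: Dy.
Qed.

End Closure.

End RealForm.

Section LinearOp.
Variables (K : numFieldType) (V W : lmodType K).

Section Subspace.
Variables (D : set V) (linD : linear_subspace D).

Lemma subspace0 : D 0. Proof. by case: linD. Qed.

Lemma subspaceD x y : D x -> D y -> D (x + y).
Proof. by case: linD => _ lin Dx Dy; have := lin 1 x y Dx Dy; rewrite scale1r. Qed.

Lemma subspaceZ a x : D x -> D (a *: x).
Proof. by case: linD => _ lin Dx; have := lin a x 0 Dx subspace0; rewrite addr0. Qed.

Lemma subspaceB x y : D x -> D y -> D (x - y).
Proof. by move=> Dx Dy; rewrite -scaleN1r; apply/subspaceD/subspaceZ. Qed.

End Subspace.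

Variables (D : set V) (A : V -> W) (linA : linear_op D A).
Let linD := linA.1.

Lemma opD x y : D x -> D y -> A (x + y) = A x + A y.
Proof. by move=> Dx Dy; have := linA.2 1 x y Dx Dy; rewrite !scale1r. Qed.

Lemma op0 : A 0 = 0.
Proof.
have := opD (subspace0 linD) (subspace0 linD); rewrite addr0 => A00.
by apply/(addrI (A 0)); rewrite -A00 addr0.
Qed.

Lemma opZ a x : D x -> A (a *: x) = a *: A x.
Proof.
by move=> Dx; have := linA.2 a x 0 Dx (subspace0 linD); rewrite !addr0 op0 addr0.
Qed.

Lemma opB x y : D x -> D y -> A (x - y) = A x - A y.
Proof.
move=> Dx Dy; have DNy : D (- y) by rewrite -scaleN1r; apply: subspaceZ.
by rewrite opD // -scaleN1r opZ // scaleN1r.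
Qed.

End LinearOp.

Lemma eq0_of_norm_lt (R : numFieldType) (x : R) :
  (forall e, 0 < e -> `|x| < e) -> x = 0.
Proof.
move=> small; apply/eqP; rewrite -normr_eq0 eq_le normr_ge0 andbT.
by apply/ler_addgt0Pr => e /small/ltW; rewrite add0r.
Qed.

(* [K] is either [R], with [emb], [cj] and [re] the identity, or [R[i]], with
   [emb] = [_%:C], [cj] the conjugation and [re] the real part. *)
Section Scalars.
Variables (R : realType) (K : numFieldType) (emb : {rmorphism R -> K})
  (cj : {rmorphism K -> K}) (re : K -> R).
Hypotheses (emb_le : {mono emb : a b / a <= b})
  (emb_re : forall x, x \is Num.real -> emb (re x) = x)
  (reD : {morph re : x y / x + y})
  (reM : forall a x, re (emb a * x) = a * re x)
  (re_cj : forall x, re (cj x) = re x)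
  (re_polar : forall f, (forall a, re (a * f) = 0) -> f = 0).

Let emb_lt : {mono emb : a b / a < b} := leW_mono emb_le.

Lemma emb_real a : emb a \is Num.real.
Proof. by rewrite realE -(rmorph0 emb) !emb_le le_total. Qed.

Lemma re_emb a : re (emb a) = a.
Proof. by apply: (inc_inj emb_le); rewrite emb_re ?emb_real. Qed.

Lemma re0 : re 0 = 0.
Proof. by rewrite -(rmorph0 emb) re_emb. Qed.

Lemma reB x y : re (x - y) = re x - re y.
Proof. by apply/(addIr (re y)); rewrite -reD !subrK. Qed.

Lemma re_gt0 x : 0 < x -> 0 < re x /\ emb (re x) = x.
Proof. by move=> x0; rewrite -emb_lt rmorph0 emb_re ?gtr0_real. Qed.

Lemma eq0_of_re_eq0 (V : lmodType K) (D : set V) (f : V -> K) :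
  (forall a h, D h -> D (a *: h) /\ f (a *: h) = a * f h) ->
  (forall h, D h -> re (f h) = 0) -> forall h, D h -> f h = 0.
Proof.
move=> hom ref h Dh; apply: re_polar => a.
by have [Dah <-] := hom a h Dh; apply: ref.
Qed.

Definition rscale (V : lmodType K) (a : R) (x : V) := emb a *: x.

Section InnerProduct.
Variables (V : normedModType K) (ip : V -> V -> K).
Hypothesis ipP : is_inner_product cj ip.

Lemma ipDl x y z : ip (x + y) z = ip x z + ip y z.
Proof. by case: ipP => lin _ _; have := lin 1 x y z; rewrite scale1r mul1r. Qed.

Lemma ip0l z : ip 0 z = 0.
Proof. by apply/(addrI (ip 0 z)); rewrite -ipDl !addr0. Qed.

Lemma ipZl a x z : ip (a *: x) z = a * ip x z.
Proof. by case: ipP => lin _ _; have := lin a x 0 z; rewrite addr0 ip0l addr0. Qed.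

Lemma ipC x y : ip y x = cj (ip x y).
Proof. by case: ipP. Qed.

Lemma ipBl x y z : ip (x - y) z = ip x z - ip y z.
Proof. by rewrite ipDl -scaleN1r ipZl mulN1r. Qed.

Lemma ipBr x y z : ip z (x - y) = ip z x - ip z y.
Proof. by rewrite !(ipC _ z) ipBl rmorphB. Qed.

Definition rip x y := re (ip x y).

Lemma ripC x y : rip x y = rip y x.
Proof. by rewrite /rip ipC re_cj. Qed.

Lemma ripDl x y z : rip (x + y) z = rip x z + rip y z.
Proof. by rewrite /rip ipDl reD. Qed.

Lemma ripZl a x z : rip (emb a *: x) z = a * rip x z.
Proof. by rewrite /rip ipZl reM. Qed.

Lemma ripE v : emb (rip v v) = `|v| ^+ 2.
Proof.
rewrite /rip; have ->: ip v v = `|v| ^+ 2 by case: ipP.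
by apply: emb_re; apply/rpredX/normr_real.
Qed.

Lemma rip_ge0 v : 0 <= rip v v.
Proof. by have := exprn_ge0 2 (normr_ge0 v); rewrite -ripE -(rmorph0 emb) emb_le. Qed.

Lemma ripP : real_form (@rscale V) rip.
Proof. by split; [exact: ripDl | exact: ripZl | exact: ripC | exact: rip_ge0]. Qed.

Lemma rip_eq0 v : rip v v = 0 -> v = 0.
Proof.
move=> /(congr1 emb); rewrite ripE rmorph0 => /eqP.
by rewrite sqrf_eq0 normr_eq0 => /eqP.
Qed.

Lemma norm_lt_emb v e : 0 < e -> (`|v| < emb e) = (rip v v < e ^+ 2).
Proof.
move=> e0; rewrite -(ltr_pXn2r (_ : 0 < 2)%N) ?nnegrE ?normr_ge0 //.
  by rewrite -ripE -rmorphXn emb_lt.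
by rewrite -(rmorph0 emb) emb_le ltW.
Qed.

Lemma closure_ripP (D : set V) x : closure D x <-> form_closure rip D x.
Proof.
split=> [clx e e0 | clx B /nbhs_ballP[eps eps0 epsB]].
  have se0 : 0 < Num.sqrt e by rewrite sqrtr_gt0.
  have ese0 : 0 < emb (Num.sqrt e) by rewrite -(rmorph0 emb) emb_lt.
  have [h [Dh hx]] := clx _ (nbhsx_ballx x _ ese0).
  by exists h => //; move: hx; rewrite -ball_normE /= norm_lt_emb // sqr_sqrtr // ltW.
have [e0 epsE] := re_gt0 eps0; rewrite -epsE in epsB.
have [h Dh hx] := clx _ (exprn_gt0 2 e0).
by exists h; split => //; apply: epsB; rewrite -ball_normE /= norm_lt_emb.
Qed.

Lemma dense_orth (D : set V) : densely_defined D ->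
  forall w, (forall h, D h -> ip h w = 0) -> w = 0.
Proof.
move=> dD w orth; apply: rip_eq0.
have /closure_ripP Dw : closure D w by rewrite dD.
apply: (form_closure_orth ripP Dw) => h Dh.
by rewrite /rip orth // re0.
Qed.

End InnerProduct.

Lemma rip_complete (V : completeNormedModType K) (ip : V -> V -> K) :
  is_inner_product cj ip ->
  forall u, form_cauchy (rip ip) u -> exists b, form_cvg (rip ip) u b.
Proof.
move=> ipP u cu.
have cvgu : cauchy (u @ \oo).
  apply: cauchy_exP => eps eps0; have [e0 epsE] := re_gt0 eps0.
  have [N HN] := cu _ (exprn_gt0 2 e0).
  exists (u N); exists N => // n /= Nn.
  by rewrite -ball_normE /= -epsE (norm_lt_emb ipP) //; apply: HN.
have [b ub] := iffLR (cvg_ex _) (cauchy_cvg _ cvgu).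
exists b => e e0; have se0 : 0 < Num.sqrt e by rewrite sqrtr_gt0.
have ese0 : 0 < emb (Num.sqrt e) by rewrite -(rmorph0 emb) emb_lt.
move/cvgrPdist_lt: ub => /(_ _ ese0)[N _ HN]; exists N => n /HN.
by rewrite distrC (norm_lt_emb ipP) // sqr_sqrtr // ltW.
Qed.

Lemma dense_of_orth (V : completeNormedModType K) (ip : V -> V -> K) (D : set V) :
  is_inner_product cj ip -> linear_subspace D ->
  (forall w, (forall h, D h -> ip h w = 0) -> w = 0) -> densely_defined D.
Proof.
move=> ipP linD orth; apply/seteqP; split=> // x _; apply/(closure_ripP ipP).
apply: (form_dense_of_orth (ripP ipP)).
- exact: subspace0.
- by move=> ? ?; apply: subspaceD.
- by move=> ? ?; apply: subspaceZ.
- exact: rip_complete.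
- move=> y Dy; apply: orth; apply: (eq0_of_re_eq0 (f := ip^~ y)) => // a h Dh.
  by split; [exact: subspaceZ | exact: ipZl].
Qed.

Section Adjoint.
Variables (V W : normedModType K) (ipV : V -> V -> K) (ipW : W -> W -> K)
  (DA : set V) (A : V -> W) (DB : set W) (B : W -> V).
Hypotheses (ipVP : is_inner_product cj ipV) (ipWP : is_inner_product cj ipW)
  (linA : linear_op DA A).

Lemma ip_adjoint_rel k z :
  (forall h, DA h -> rip ipW (A h) k = rip ipV h z) ->
  forall h, DA h -> ipW (A h) k = ipV h z.
Proof.
move=> rel h Dh; apply/eqP; rewrite -subr_eq0; apply/eqP; move: h Dh.
apply: (eq0_of_re_eq0 (f := fun h => ipW (A h) k - ipV h z)) => [a h Dh|h Dh].
  split; first exact: (subspaceZ linA.1).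
  by rewrite (opZ linA) // (ipZl ipWP) (ipZl ipVP) mulrBr.
by rewrite reB -/(rip _ _ _) -/(rip _ _ _) rel // subrr.
Qed.

Lemma adjointP :
  (forall k, DB k <-> exists z, forall h, DA h -> rip ipW (A h) k = rip ipV h z) ->
  (forall k h, DB k -> DA h -> rip ipW (A h) k = rip ipV h (B k)) ->
  is_adjoint ipV ipW DA A DB B.
Proof.
move=> domB valB; split=> [k|k Bk].
  rewrite domB; split=> -[z rel]; exists z; first exact: ip_adjoint_rel.
  by move=> h /rel; rewrite /rip => ->.
by apply: ip_adjoint_rel => h Dh; apply: valB.
Qed.

Lemma adjoint_rip : is_adjoint ipV ipW DA A DB B -> densely_defined DA ->
  forall k z, (forall h, DA h -> rip ipW (A h) k = rip ipV h z) -> DB k /\ B k = z.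
Proof.
move=> [domB valB] dA k z /ip_adjoint_rel rel.
have Bk : DB k by apply/domB; exists z.
split=> //; apply/eqP; rewrite -subr_eq0; apply/eqP.
by apply: (dense_orth ipVP dA) => h Dh; rewrite (ipBr ipVP) -valB // rel // subrr.
Qed.

End Adjoint.

Section Block.
Variables (H Kk : completeNormedModType K) (ipH : H -> H -> K) (ipK : Kk -> Kk -> K)
  (DS : set H) (S : H -> Kk) (DT : set Kk) (T : Kk -> H).
Hypotheses (ipHP : is_inner_product cj ipH) (ipKP : is_inner_product cj ipK)
  (linS : linear_op DS S) (linT : linear_op DT T).

Let ripHP := ripP ipHP.
Let ripKP := ripP ipKP.

Definition pip (z w : H * Kk) := rip ipH z.1 w.1 + rip ipK z.2 w.2.
Definition dom (z : H * Kk) := DS z.1 /\ DT z.2.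
Definition MST (z : H * Kk) : H * Kk := (- T z.2, S z.1).
Local Notation M lam := (MST_sub S T lam).

Lemma pipC z w : pip z w = pip w z.
Proof. by rewrite /pip (ripC ipHP) (ripC ipKP). Qed.

Lemma pip_ge0 z : 0 <= pip z z.
Proof. by rewrite addr_ge0 // rip_ge0. Qed.

Lemma pipP : real_form (@rscale (H * Kk)%type) pip.
Proof.
split=> [x y z|a x z|x y|]; rewrite /pip /=; last exact: pip_ge0.
- by rewrite (ripDl ipHP) (ripDl ipKP) addrACA.
- by rewrite (ripZl ipHP) (ripZl ipKP) mulrDr.
- by rewrite (ripC ipHP) (ripC ipKP).
Qed.

Lemma pnorm2E z : pnorm2 z = emb (pip z z).
Proof. by rewrite /pnorm2 /pip rmorphD (ripE ipHP) (ripE ipKP). Qed.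

Lemma pip_eq0 z : pip z z = 0 -> z = 0.
Proof.
case: z => h k; rewrite /pip /= => hk0.
have h0 := rip_ge0 ipHP h; have k0 := rip_ge0 ipKP k.
have hh : rip ipH h h = 0 by lra.
have kk : rip ipK k k = 0 by lra.
by rewrite (rip_eq0 ipHP hh) (rip_eq0 ipKP kk).
Qed.

Lemma pip_complete u : form_cauchy pip u -> exists b, form_cvg pip u b.
Proof.
move=> cu.
have cu1 : form_cauchy (rip ipH) (fun n => (u n).1).
  move=> e /cu[N HN]; exists N => m n Nm Nn; have := HN m n Nm Nn.
  by rewrite /pip /=; have := rip_ge0 ipKP ((u m).2 - (u n).2); lra.
have cu2 : form_cauchy (rip ipK) (fun n => (u n).2).
  move=> e /cu[N HN]; exists N => m n Nm Nn; have := HN m n Nm Nn.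
  by rewrite /pip /=; have := rip_ge0 ipHP ((u m).1 - (u n).1); lra.
have [b1 cb1] := rip_complete ipHP cu1; have [b2 cb2] := rip_complete ipKP cu2.
exists (b1, b2) => e e0; have e2 : 0 < e / 2 by lra.
have [N1 H1] := cb1 _ e2; have [N2 H2] := cb2 _ e2.
by exists (maxn N1 N2) => n; rewrite geq_max => /andP[/H1 ? /H2 ?]; rewrite /pip /=; lra.
Qed.

Lemma pipDl x y z : pip (x + y) z = pip x z + pip y z.
Proof. by case: pipP. Qed.

Lemma pipZl a z w : pip (emb a *: z) w = a * pip z w.
Proof. by case: pipP => _ pipZ _ _; apply: pipZ. Qed.

Lemma pipZr a z w : pip z (emb a *: w) = a * pip z w.
Proof. by rewrite pipC pipZl pipC. Qed.

Lemma MST_subE lam z : M lam z = MST z - lam *: z.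
Proof. by []. Qed.

Lemma dom_subspace : linear_subspace dom.
Proof.
split; first by split; [exact: subspace0 linS.1 | exact: subspace0 linT.1].
by move=> a x y [? ?] [? ?]; split; [apply: linS.1.2 | apply: linT.1.2].
Qed.

Lemma MST_linear : linear_op dom MST.
Proof.
split=> [|a x y [Dx1 Dx2] [Dy1 Dy2]]; first exact: dom_subspace.
have [DaT DaS] := (subspaceZ linT.1 a Dx2, subspaceZ linS.1 a Dx1).
rewrite /MST /= (opD linT) // (opZ linT) // (opD linS) // (opZ linS) //.
by rewrite opprD -scalerN.
Qed.

Lemma MST_sub_linear lam : linear_op dom (M lam).
Proof.
split=> [|a x y Dx Dy]; first exact: dom_subspace.
rewrite !MST_subE (MST_linear.2 a x y Dx Dy).
by rewrite scalerDr opprD addrACA scalerBr !scalerA (mulrC lam a).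
Qed.

Definition skew_symmetric :=
  forall z z', dom z -> dom z' -> pip (MST z) z' = - pip z (MST z').

Definition skew_adjoint := skew_symmetric /\
  forall y v, (forall z, dom z -> pip (MST z) y = pip z v) -> dom y /\ MST y = - v.

Lemma MST_sub_sqr r z : pip (M (emb r) z) (M (emb r) z) =
  pip (MST z) (MST z) - 2 * r * pip (MST z) z + r ^+ 2 * pip z z.
Proof.
by rewrite MST_subE (form_sqrB pipP) pipZr pipZl pipZr; ring.
Qed.

Lemma skew_MST_self : skew_symmetric -> forall z, dom z -> pip (MST z) z = 0.
Proof. by move=> skew z Dz; have := skew z z Dz Dz; rewrite (pipC z); lra. Qed.

Lemma skew_lower_bound : skew_symmetric -> forall r z, dom z ->
  r ^+ 2 * pip z z <= pip (M (emb r) z) (M (emb r) z).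
Proof.
move=> skew r z Dz; rewrite MST_sub_sqr skew_MST_self //.
by have := pip_ge0 (MST z); lra.
Qed.

Lemma skew_of_lower_bound : (forall r z, r != 0 -> dom z ->
  r ^+ 2 * pip z z <= pip (M (emb r) z) (M (emb r) z)) -> skew_symmetric.
Proof.
move=> lb.
have self z : dom z -> pip (MST z) z = 0.
  move=> Dz; suff : - 2 * pip (MST z) z = 0 by lra.
  apply: (eq0_of_affine_ge0 (b := pip (MST z) (MST z))) => r r0.
  by have := lb r z r0 Dz; rewrite MST_sub_sqr; lra.
move=> z z' Dz Dz'; have := self _ (subspaceD dom_subspace Dz Dz').
rewrite (opD MST_linear) // pipDl !(formDr pipP) !self //.
by rewrite (pipC z (MST z')); lra.
Qed.

Lemma MST_sub_inj r z1 z2 : skew_symmetric -> r != 0 -> dom z1 -> dom z2 ->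
  M (emb r) z1 = M (emb r) z2 -> z1 = z2.
Proof.
move=> skew r0 D1 D2 eqM; apply/eqP; rewrite -subr_eq0; apply/eqP/pip_eq0.
have r2 : 0 < r ^+ 2 by rewrite exprn_even_gt0 // r0 orbT.
have := skew_lower_bound skew r (subspaceB dom_subspace D1 D2).
rewrite (opB (MST_sub_linear _)) // eqM subrr (form0l pipP) pmulr_rle0 //.
by move=> le0; apply/eqP; rewrite eq_le le0 pip_ge0.
Qed.

Lemma skew_adjoint_closed zs z x : skew_adjoint -> (forall n, dom (zs n)) ->
  form_cvg pip zs z -> form_cvg pip (fun n => MST (zs n)) x -> dom z /\ MST z = x.
Proof.
move=> [skew adj] Dzs cz cx; rewrite -[x]opprK; apply: adj => z' Dz'.
apply/eqP; rewrite -subr_eq0; apply/eqP/eq0_of_norm_lt => e e0.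
have e2 : 0 < e / 2 by lra.
have [N1 H1] := form_cvg_pairing pipP (MST z') cz e2.
have [N2 H2] := form_cvg_pairing pipP z' cx e2.
pose n := maxn N1 N2; have h1 := H1 n (leq_maxl _ _); have h2 := H2 n (leq_maxr _ _).
have -> : pip (MST z') z - pip z' (- x) =
    - (pip (zs n - z) (MST z') + pip (MST (zs n) - x) z').
  rewrite (formNr pipP) !(formBl pipP) (pipC (zs n)) (pipC z) (pipC (MST (zs n))).
  by rewrite (pipC x) (skew z' (zs n)) //; lra.
by rewrite normrN; apply: le_lt_trans (ler_normD _ _) _; lra.
Qed.

Section SkewAdjoint.
Hypothesis skewA : skew_adjoint.
Variables (r : R) (r0 : r != 0).

Let skew : skew_symmetric := skewA.1.

Lemma skew_adjoint_range_complete u :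
  (forall n, exists2 z, dom z & M (emb r) z = u n) -> form_cauchy pip u ->
  exists2 x, (exists2 z, dom z & M (emb r) z = x) & form_cvg pip u x.
Proof.
move=> Ru cu.
have /choice[zs Hzs] n : exists z, dom z /\ M (emb r) z = u n.
  by have [z ? ?] := Ru n; exists z.
have r2 : 0 < r ^+ 2 by rewrite exprn_even_gt0 // r0 orbT.
have czs : form_cauchy pip zs.
  move=> e e0; have [N HN] := cu _ (mulr_gt0 r2 e0); exists N => m n Nm Nn.
  rewrite -(ltr_pM2l r2); apply: le_lt_trans (HN m n Nm Nn).
  have [[Dm Mm] [Dn Mn]] := (Hzs m, Hzs n).
  have := skew_lower_bound skew r (subspaceB dom_subspace Dm Dn).
  by rewrite (opB (MST_sub_linear _)) // Mm Mn.
have [z cz] := pip_complete czs; have [x cx] := pip_complete cu.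
have cM : form_cvg pip (fun n => MST (zs n)) (x + rscale r z).
  have -> : (fun n => MST (zs n)) = (fun n => u n + rscale r (zs n)).
    by apply: funext => n; rewrite -(Hzs n).2 MST_subE subrK.
  exact: (form_cvgD pipP cx (form_cvgZ pipP r cz)).
have [Dz Mz] := skew_adjoint_closed skewA (fun n => (Hzs n).1) cz cM.
by exists x => //; exists z; rewrite // MST_subE Mz addrK.
Qed.

Lemma skew_adjoint_range_orth y :
  (forall z, dom z -> pip (M (emb r) z) y = 0) -> y = 0.
Proof.
move=> orth; have [Dy My] : dom y /\ MST y = - (emb r *: y).
  apply: skewA.2 => z Dz; move/eqP: (orth z Dz).
  by rewrite MST_subE (formBl pipP) pipZl pipZr subr_eq0 => /eqP.
have := skew_MST_self skew Dy; rewrite My (formNl pipP) pipZl.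
by move/eqP; rewrite oppr_eq0 mulf_eq0 (negbTE r0) => /eqP/pip_eq0.
Qed.

Lemma skew_adjoint_surjective x : exists2 z, dom z & M (emb r) z = x.
Proof.
apply: (form_orth_total pipP (V := [set x | exists2 z, dom z & M (emb r) z = x])).
- by exists 0; [exact: subspace0 dom_subspace | exact: op0 (MST_sub_linear _)].
- move=> _ _ [z Dz <-] [z' Dz' <-]; exists (z + z').
    exact (subspaceD dom_subspace Dz Dz').
  exact (opD (MST_sub_linear _) Dz Dz').
- move=> a _ [z Dz <-]; exists (emb a *: z).
    exact (subspaceZ dom_subspace _ Dz).
  exact (opZ (MST_sub_linear _) _ Dz).
- exact: skew_adjoint_range_complete.
- by move=> y orth; apply: skew_adjoint_range_orth => z Dz; apply: orth; exists z.
Qed.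

End SkewAdjoint.

Lemma inverse_opnorm_leP r Rinv : r != 0 -> is_inverse_MST DS S DT T (emb r) Rinv ->
  opnorm_le Rinv `|emb r|^-1 <->
  forall z, dom z -> r ^+ 2 * pip z z <= pip (M (emb r) z) (M (emb r) z).
Proof.
move=> r0 [RM MR]; have r2 : 0 < r ^+ 2 by rewrite exprn_even_gt0 // r0 orbT.
have scaleE a b :
    (pnorm2 a <= `|emb r|^-1 ^+ 2 * pnorm2 b) = (r ^+ 2 * pip a a <= pip b b).
  rewrite !pnorm2E exprVn real_normK ?emb_real // -rmorphXn -fmorphV -rmorphM emb_le.
  by rewrite -(ler_pM2l r2) mulrA mulfV ?gt_eqF // mul1r.
split=> [bound z [D1 D2] | lb w].
  by have := bound (M (emb r) z); rewrite scaleE MR.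
by have [D1 [D2 Mw]] := RM w; rewrite scaleE; have := lb _ (conj D1 D2); rewrite Mw.
Qed.

Lemma skew_adjoint_resolvent : skew_adjoint -> forall t, t \is Num.real -> t != 0 ->
  in_resolvent DS S DT T t /\
  forall Rinv, is_inverse_MST DS S DT T t Rinv -> opnorm_le Rinv `|t|^-1.
Proof.
move=> skewA t treal t0; rewrite -(emb_re treal) in t0 *; move: (re t) t0 => r t0.
have r0 : r != 0 by apply: contraNneq t0 => ->; rewrite rmorph0.
have bound Rinv : is_inverse_MST DS S DT T (emb r) Rinv -> opnorm_le Rinv `|emb r|^-1.
  move=> inv; apply/(inverse_opnorm_leP r0 inv) => z Dz.
  exact: skew_lower_bound skewA.1 r z Dz.
split=> //.
have /choice[Rinv HR] x : exists z, dom z /\ M (emb r) z = x.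
  by have [z ? ?] := skew_adjoint_surjective skewA r0 x; exists z.
have inv : is_inverse_MST DS S DT T (emb r) Rinv.
  split=> [x | w D1 D2]; first by have [[? ?] ?] := HR x.
  have [DR MR] := HR (M (emb r) w).
  exact: MST_sub_inj skewA.1 r0 DR (conj D1 D2) MR.
exists Rinv; split=> //; exists `|emb r|^-1; split; last exact: bound.
by rewrite invr_ge0.
Qed.

Section Surjective.
Hypotheses (skew : skew_symmetric)
  (surj1 : forall x, exists2 z, dom z & M (emb 1) z = x).

Lemma skew_dom_orth y : (forall z, dom z -> pip y z = 0) -> y = 0.
Proof.
move=> orth; have [z Dz Mz] := surj1 y.
have : pip y z = - pip z z.
  by rewrite -Mz MST_subE rmorph1 scale1r (formBl pipP) skew_MST_self // sub0r.
rewrite orth // => /eqP; rewrite eq_sym oppr_eq0 => /eqP/pip_eq0 z0.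
by rewrite -Mz z0 (op0 (MST_sub_linear _)).
Qed.

Lemma skew_adjoint_of_surjective :
  (forall x, exists2 z, dom z & M (emb (-1)) z = x) -> skew_adjoint.
Proof.
move=> surjN1; split=> // y v rel.
(* If (M + 1) z0 = y - v, then y - z0 is orthogonal to the range of M - 1. *)
have [z0 Dz0] := surjN1 (y - v); rewrite MST_subE rmorphN1 scaleN1r opprK => Mz0.
have Mz0E : MST z0 = y - v - z0 by rewrite -Mz0 addrK.
have orth z : dom z -> pip (M (emb 1) z) (y - z0) = 0.
  move=> Dz; rewrite MST_subE rmorph1 scale1r !(formBl pipP) !(formBr pipP) rel //.
  by rewrite skew // Mz0E !(formBr pipP); lra.
have [z1 Dz1 Mz1] := surj1 (y - z0).
have /pip_eq0/eqP : pip (y - z0) (y - z0) = 0 by rewrite -{1}Mz1 orth.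
rewrite subr_eq0 => /eqP yz0; split; first by rewrite yz0.
by rewrite yz0 Mz0E yz0 addrAC subrr add0r.
Qed.

End Surjective.

Section Resolvent.
Hypothesis res : forall t : K, t \is Num.real -> t != 0 ->
  in_resolvent DS S DT T t /\
  forall Rinv, is_inverse_MST DS S DT T t Rinv -> opnorm_le Rinv `|t|^-1.

Lemma resolvent_surjective r : r != 0 -> forall x, exists2 z, dom z & M (emb r) z = x.
Proof.
move=> r0 x; have emb0 : emb r != 0 by rewrite fmorph_eq0.
have [[Rinv [[RM _] _]] _] := res (emb_real r) emb0.
by have [D1 [D2 Mx]] := RM x; exists (Rinv x).
Qed.

Lemma resolvent_skew_adjoint : skew_adjoint.
Proof.
have skew : skew_symmetric.
  apply: skew_of_lower_bound => r z r0 Dz.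
  have emb0 : emb r != 0 by rewrite fmorph_eq0.
  have [[Rinv [inv _]] bound] := res (emb_real r) emb0.
  exact: (iffLR (inverse_opnorm_leP r0 inv) (bound _ inv)).
apply: skew_adjoint_of_surjective => //; apply: resolvent_surjective.
  exact: oner_neq0.
by rewrite oppr_eq0 oner_neq0.
Qed.

End Resolvent.

Lemma adjoint_pair_skew_adjoint : densely_defined DS -> densely_defined DT ->
  is_adjoint ipH ipK DS S DT T -> is_adjoint ipK ipH DT T DS S -> skew_adjoint.
Proof.
move=> dS dT adjS adjT.
split=> [[h k] [h' k'] [/= Dh Dk] [/= Dh' Dk'] | [y1 y2] [v1 v2] rel].
  rewrite /pip /= (formNl ripHP) (formNr ripHP) /rip adjS.2 // adjT.2 //.
  by rewrite -!/(rip _ _ _) (ripC ipKP k); lra.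
have [DTy2 Ty2] : DT y2 /\ T y2 = v1.
  apply: (adjoint_rip ipHP ipKP linS adjS dS) => h Dh.
  have := rel (h, 0) (conj Dh (subspace0 linT.1)).
  by rewrite /pip /= (op0 linT) oppr0 (form0l ripHP) (form0l ripKP) add0r addr0.
have [DSy1 Sy1] : DS y1 /\ S y1 = - v2.
  apply: (adjoint_rip ipKP ipHP linT adjT dT) => k Dk.
  have := rel (0, k) (conj (subspace0 linS.1) Dk).
  rewrite /pip /= (op0 linS) (form0l ripHP) (form0l ripKP) addr0 add0r.
  by rewrite (formNl ripHP) (formNr ripKP) => <-; rewrite opprK.
by split; [split | rewrite /MST /= Ty2 Sy1].
Qed.

Lemma skew_adjoint_adjoint_pair : skew_adjoint ->
  is_adjoint ipH ipK DS S DT T /\ is_adjoint ipK ipH DT T DS S.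
Proof.
move=> [skew adj].
have symS h k : DS h -> DT k -> rip ipK (S h) k = rip ipH h (T k).
  move=> Dh Dk.
  have := skew (h, 0) (0, k) (conj Dh (subspace0 linT.1)) (conj (subspace0 linS.1) Dk).
  rewrite /pip /= (op0 linT) (op0 linS) oppr0 (formNr ripHP).
  by rewrite (form0l ripHP) (form0r ripKP) add0r addr0 opprK.
have symT k h : DT k -> DS h -> rip ipH (T k) h = rip ipK k (S h).
  by move=> Dk Dh; rewrite (ripC ipHP) -symS // (ripC ipKP).
split.
  apply: (adjointP ipHP ipKP linS) => [k | k h Dk Dh]; last exact: symS.
  split=> [Dk | [z rel]]; first by exists (T k) => h Dh; apply: symS.
  have [[_ ?] _] : dom (0, k) /\ MST (0, k) = - (z, 0); last by [].
  apply: adj => -[h k'] [/= Dh Dk'].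
  by rewrite /pip /= (form0r ripHP) (form0r ripKP) add0r addr0 rel.
apply: (adjointP ipKP ipHP linT) => [h | h k Dh Dk]; last exact: symT.
split=> [Dh | [z rel]]; first by exists (S h) => k Dk; apply: symT.
have [[? _] _] : dom (h, 0) /\ MST (h, 0) = - (0, - z); last by [].
apply: adj => -[h' k] [/= Dh' Dk].
rewrite /pip /= (formNl ripHP) (form0r ripKP) (form0r ripHP) (formNr ripKP).
by rewrite rel // addr0 add0r.
Qed.

Theorem block_operator_resolvent : thm_statement cj ipH ipK DS S DT T.
Proof.
split=> [[dS [dT [adjS adjT]]] | res].
  exact: skew_adjoint_resolvent (adjoint_pair_skew_adjoint dS dT adjS adjT).
have skewA := resolvent_skew_adjoint res.
have dom_orth := skew_dom_orth skewA.1 (resolvent_surjective res (oner_neq0 R)).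
split; [|split; last exact: skew_adjoint_adjoint_pair].
- apply: (dense_of_orth ipHP linS.1) => w orth.
  suff [] : (w, 0) = 0 :> H * Kk by [].
  apply: dom_orth => -[h k] [/= Dh _].
  by rewrite /pip /= (form0l ripKP) addr0 (ripC ipHP) /rip orth // re0.
- apply: (dense_of_orth ipKP linT.1) => w orth.
  suff [] : (0, w) = 0 :> H * Kk by [].
  apply: dom_orth => -[h k] [/= _ Dk].
  by rewrite /pip /= (form0l ripHP) add0r (ripC ipKP) /rip orth // re0.
Qed.

End Block.

End Scalars.

Local Open Scope complex_scope.

Lemma complex_re_polar (R : realType) (f : R[i]) :
  (forall a : R[i], complex.Re (a * f) = 0) -> f = 0.
Proof.
case: f => f1 f2 polar.
have /= := polar 1; rewrite mul1r mul0r subr0 => ->.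
by have /= := polar (Complex 0 (-1)); rewrite mul0r sub0r mulN1r opprK => ->.
Qed.

Theorem theorem4p1 (R : realType) :
  (* real Hilbert spaces *)
  (forall (H Kk : completeNormedModType R)
     (ipH : H -> H -> R) (ipK : Kk -> Kk -> R)
     (DS : set H) (S : H -> Kk) (DT : set Kk) (T : Kk -> H),
     is_inner_product id ipH -> is_inner_product id ipK ->
     linear_op DS S -> linear_op DT T ->
     thm_statement id ipH ipK DS S DT T)
  /\
  (* complex Hilbert spaces *)
  (forall (H Kk : completeNormedModType R[i])
     (ipH : H -> H -> R[i]) (ipK : Kk -> Kk -> R[i])
     (DS : set H) (S : H -> Kk) (DT : set Kk) (T : Kk -> H),
     is_inner_product (@conjc R) ipH -> is_inner_product (@conjc R) ipK ->
     linear_op DS S -> linear_op DT T ->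
     thm_statement (@conjc R) ipH ipK DS S DT T).
Proof.
split=> H Kk ipH ipK DS S DT T ipHP ipKP linS linT.
  apply: (block_operator_resolvent (emb := idfun) (cj := idfun) (re := id)) => //.
  by move=> f /(_ 1); rewrite mul1r.
apply: (block_operator_resolvent (emb := real_complex R) (re := @complex.Re R)) => //.
- exact: lecR.
- exact: RRe_real.
- by move=> [? ?] [? ?].
- by move=> a [? ?] /=; rewrite mul0r subr0.
- by case.
- exact: complex_re_polar.
Qed.
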